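(* Let $\mathbf{f}$ be the Fibonacci word, $\phi=\frac{1+\sqrt5}{2}$, and fix a positive integer $n$. Let $\ell$ be a positive integer such that $$\phi^{-n+1}\le \min\big(\{2\ell F_n\phi\},\,1-\{2\ell F_n\phi\}\big).$$ Then for every index $x\ge 0$, $$\mathbf{f}_{[x,\,x+2F_n]}\neq \mathbf{f}_{[x+2\ell F_n,\,x+2\ell F_n+2F_n]}.$$
   Context: The Fibonacci word is $\mathbf{f}=\sigma^{\omega}(0)=0100101001001\cdots$, the fixed point of the morphism $\sigma(0)=01$, $\sigma(1)=0$. Words are $0$-indexed and $v_{[i,j]}$ denotes the substring of $v$ with letters at indices $i,\dots,j-1$. $F_1=F_2=1$, $F_n=F_{n-1}+F_{n-2}$. $\{y\}$ denotes the fractional part of a real number $y$. *)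

From Stdlib Require Import Reals Lra Lia ZArith Arith List.
Open Scope R_scope.

Fixpoint F (n : nat) : nat :=
  match n with
  | O => O
  | S O => 1%nat
  | S ((S m) as p) => (F p + F m)%nat
  end.

Definition sigma_letter (a : nat) : list nat :=
  match a with
  | O => 0%nat :: 1%nat :: nil
  | _ => 0%nat :: nil
  end.

Definition sigma (w : list nat) : list nat := flat_map sigma_letter w.

Fixpoint sigma_iter (k : nat) : list nat :=
  match k with
  | O => 0%nat :: nil
  | S k' => sigma (sigma_iter k')
  end.

(* The Fibonacci word f = sigma^omega(0), 0-indexed.  Since sigma^k(0) is a
   prefix of sigma^(k+1)(0) and has length F (k+2) >= k+1, the letter at
   index i is the i-th letter of sigma^(i+1)(0). *)
Definition fib_word (i : nat) : nat := nth i (sigma_iter (S i)) 0%nat.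

(* v_[i,j] : the factor with letters at indices i, ..., j-1. *)
Definition factor (v : nat -> nat) (i j : nat) : list nat :=
  map v (seq i (j - i)).

Definition phi : R := (1 + sqrt 5) / 2.

Definition frac (y : R) : R := y - IZR (Int_part y).

From Pilot Require Import Defs.
From Stdlib Require Import Reals Lra Lia ZArith Arith List.
Open Scope R_scope.

(* The Fibonacci word is the mechanical word of slope alpha = 2 - phi = phi^-2:
   f_i = floor((i+2) alpha) - floor((i+1) alpha).  Hence a factor of length m at
   position x determines floor(theta_x + j alpha) for j <= m, where
   theta_x = {(x+1) alpha}.  Since alpha + phi = 2, theta_x and theta_(x+d) differ
   modulo 1 by {d phi}, which by hypothesis is at distance at least
   psi^(n-1) = phi^(1-n) from the integers.  As F_k alpha lies within psi^k of an
   integer, alternately above and below, the points j alpha with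
   j < F_(n+1) <= 2 F_n meet every interval of length psi^(n-1) modulo 1; one of
   them puts an integer between theta_x + j alpha and theta_(x+d) + j alpha, so
   the two factors differ. *)

Lemma nth_map_seq (f : nat -> nat) (start len k : nat) :
  (k < len)%nat -> nth k (map f (seq start len)) 0%nat = f (start + k)%nat.
Proof.
  intro Hk. rewrite (nth_indep _ _ (f 0%nat)) by (rewrite length_map, length_seq; exact Hk).
  rewrite map_nth, seq_nth by exact Hk. reflexivity.
Qed.

Lemma nth_factor (v : nat -> nat) (i len k : nat) :
  (k < len)%nat -> nth k (factor v i (i + len)) 0%nat = v (i + k)%nat.
Proof.
  intro Hk. unfold factor. replace (i + len - i)%nat with len by lia.
  exact (nth_map_seq v i len k Hk).
Qed.

Lemma frac_bounds (y : R) : 0 <= frac y < 1.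
Proof. destruct (base_fp y) as [h1 h2]. unfold frac_part in *. unfold frac. lra. Qed.

Lemma unit_interval_shift (u v q : R) :
  0 <= u < 1 -> 0 <= v < 1 -> 0 <= q <= 1 -> (exists N : Z, v - u + q = IZR N) ->
  v = u + (1 - q) \/ u = v + q.
Proof.
  intros hu hv hq [N HN].
  assert (N_bounds : (-1 < N < 2)%Z) by (split; apply lt_IZR; rewrite <- HN; simpl; lra).
  destruct (Z.eq_dec N 0) as [->|N0]; [right; simpl in HN; lra|].
  replace N with 1%Z in HN by lia. left. simpl in HN. lra.
Qed.

Section MechanicalWord.

Variable a : R.
Hypothesis a_range : 0 <= a < 1.

Definition floor_mul (u : nat) : nat := Z.to_nat (Int_part (INR u * a)).

Lemma Int_part_floor_mul (u : nat) : Int_part (INR u * a) = Z.of_nat (floor_mul u).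
Proof.
  unfold floor_mul. rewrite Z2Nat.id; [reflexivity|].
  destruct (base_Int_part (INR u * a)) as [_ h].
  assert (Hgt : IZR (-1) < IZR (Int_part (INR u * a)))
    by (pose proof (pos_INR u); simpl; nra).
  apply lt_IZR in Hgt. lia.
Qed.

Lemma floor_mul_spec (u : nat) : INR (floor_mul u) <= INR u * a < INR (floor_mul u) + 1.
Proof.
  destruct (base_Int_part (INR u * a)) as [h1 h2].
  rewrite Int_part_floor_mul, <- INR_IZR_INZ in h1, h2. lra.
Qed.

Lemma floor_mul_unique (u k : nat) : INR k <= INR u * a < INR k + 1 -> floor_mul u = k.
Proof.
  intro hk. apply Nat2Z.inj. rewrite <- Int_part_floor_mul. symmetry.
  apply Int_part_spec. rewrite <- INR_IZR_INZ. lra.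
Qed.

Lemma floor_mul_S (u : nat) :
  floor_mul (S u) = floor_mul u \/ floor_mul (S u) = S (floor_mul u).
Proof.
  destruct (floor_mul_spec u) as [a1 a2]. destruct (floor_mul_spec (S u)) as [b1 b2].
  rewrite S_INR in b1, b2.
  assert (floor_mul u < floor_mul (S u) + 1)%nat by (apply INR_lt; rewrite plus_INR; simpl; lra).
  assert (floor_mul (S u) < floor_mul u + 2)%nat by (apply INR_lt; rewrite plus_INR; simpl; lra).
  lia.
Qed.

Lemma floor_mul_S_le (u : nat) : (floor_mul (S u) <= u)%nat.
Proof.
  destruct (floor_mul_spec (S u)) as [h _]. rewrite S_INR in h.
  apply Nat.lt_succ_r, INR_lt. rewrite S_INR. pose proof (pos_INR u). nra.
Qed.

Definition mech_word (i : nat) : nat := (floor_mul (S (S i)) - floor_mul (S i))%nat.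

Lemma floor_mul_SS (i : nat) : floor_mul (S (S i)) = (floor_mul (S i) + mech_word i)%nat.
Proof. unfold mech_word. destruct (floor_mul_S (S i)); lia. Qed.

Lemma mech_word_le_1 (i : nat) : (mech_word i <= 1)%nat.
Proof. unfold mech_word. destruct (floor_mul_S (S i)); lia. Qed.

Lemma Int_part_frac_add (z j : nat) :
  Int_part (frac (INR (S z) * a) + INR j * a) =
  (Z.of_nat (floor_mul (S (z + j))) - Z.of_nat (floor_mul (S z)))%Z.
Proof.
  symmetry. apply Int_part_spec. unfold frac. rewrite Int_part_floor_mul.
  destruct (floor_mul_spec (S (z + j))) as [h1 h2].
  rewrite S_INR, plus_INR in h1, h2. rewrite minus_IZR, <- !INR_IZR_INZ, S_INR. lra.
Qed.

Lemma Int_part_frac_add_eq (x y m : nat) :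
  (forall j, (j < m)%nat -> mech_word (x + j) = mech_word (y + j)) ->
  forall j, (j <= m)%nat ->
  Int_part (frac (INR (S x) * a) + INR j * a) = Int_part (frac (INR (S y) * a) + INR j * a).
Proof.
  intros Hm j Hj. rewrite !Int_part_frac_add.
  enough (floor_mul (S (x + j)) + floor_mul (S y) = floor_mul (S (y + j)) + floor_mul (S x))%nat
    by lia.
  induction j as [|j IH].
  - rewrite !Nat.add_0_r. lia.
  - rewrite !Nat.add_succ_r, !floor_mul_SS, (Hm j) by lia.
    specialize (IH ltac:(lia)). lia.
Qed.

Definition dense_mod1 (δ : R) (J : nat) : Prop :=
  forall b : R, exists j, (j < J)%nat /\ exists k : Z, b <= INR j * a + IZR k < b + δ.

Lemma Int_part_shift_differs (δ D θ : R) (J : nat) :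
  dense_mod1 δ J -> δ <= D <= 1 ->
  exists j, (j < J)%nat /\ Int_part (θ + INR j * a) <> Int_part (θ + D + INR j * a).
Proof.
  intros Hdense HD. destruct (Hdense (1 - D - θ)) as [j [Hj [k Hk]]].
  exists j. split; [exact Hj|].
  assert (E0 : (- k)%Z = Int_part (θ + INR j * a)).
  { apply Int_part_spec. rewrite opp_IZR. lra. }
  assert (E1 : (1 - k)%Z = Int_part (θ + D + INR j * a)).
  { apply Int_part_spec. rewrite minus_IZR. simpl. lra. }
  rewrite <- E0, <- E1. lia.
Qed.

End MechanicalWord.

Definition psi : R := phi - 1.
Definition alpha : R := 2 - phi.

Lemma sqrt5_bounds : 2 < sqrt 5 < 3.
Proof.
  pose proof (sqrt_sqrt 5 ltac:(lra)). pose proof (sqrt_pos 5). split; nra.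
Qed.

Lemma psi_bounds : 0 < psi < 1.
Proof. pose proof sqrt5_bounds. unfold psi, phi. lra. Qed.

Lemma psi_sq : psi * psi = 1 - psi.
Proof. pose proof (sqrt_sqrt 5 ltac:(lra)). unfold psi, phi. nra. Qed.

Lemma psi_mul_phi : psi * phi = 1.
Proof. pose proof psi_sq. unfold psi in *. nra. Qed.

Lemma alpha_bounds : 0 < alpha < 1/2.
Proof. pose proof sqrt5_bounds. unfold alpha, phi. lra. Qed.

Lemma alpha_range : 0 <= alpha < 1.
Proof. pose proof alpha_bounds. lra. Qed.

Lemma alpha_sq : alpha * alpha = 3 * alpha - 1.
Proof. pose proof psi_sq. unfold alpha, psi in *. nra. Qed.

Lemma sq_add_sq_neq_3mul (m u : nat) : (0 < u)%nat -> (m * m + u * u <> 3 * m * u)%nat.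
Proof.
  revert m. induction u as [u IH] using lt_wf_ind. intros m Hu Heq.
  destruct (Nat.Even_or_Odd m) as [[p ->]|[p ->]];
    destruct (Nat.Even_or_Odd u) as [[q ->]|[q ->]]; try lia.
  apply (IH q ltac:(lia) p ltac:(lia)). lia.
Qed.

(* [u * alpha = m] would make [m / u] a rational root of [X^2 - 3X + 1]. *)
Lemma nat_mul_alpha_neq (u m : nat) : (0 < u)%nat -> INR u * alpha <> INR m.
Proof.
  intros Hu H. apply (sq_add_sq_neq_3mul m u Hu), INR_eq.
  rewrite plus_INR, !mult_INR, <- H. pose proof alpha_sq. simpl. nra.
Qed.

Lemma floor_mul_alpha_return (L : nat) :
  let m := (L - floor_mul alpha (S L))%nat in
  let P := (L + m)%nat in
  floor_mul alpha (S P) = m /\ floor_mul alpha (S (S P)) = m /\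
  (floor_mul alpha (S (S L)) = floor_mul alpha (S L) -> floor_mul alpha (S (S (S P))) = S m).
Proof.
  intros m P. pose proof alpha_bounds as [a0 a1]. pose proof alpha_sq as Hsq.
  pose proof (floor_mul_S_le alpha alpha_range L) as HA.
  set (A := floor_mul alpha (S L)) in *.
  destruct (floor_mul_spec alpha alpha_range (S L)) as [t0 t1]. fold A in t0, t1.
  assert (tne : INR (S L) * alpha <> INR A) by (apply nat_mul_alpha_neq; lia).
  set (t := INR (S L) * alpha - INR A).
  (* [t = {(L+1) alpha}], and [(P+2) alpha] falls just below the integer [m + 1] *)
  assert (Hret : INR (S (S P)) * alpha = INR m + 1 - t * (1 - alpha)).
  { unfold t, P, m. rewrite !S_INR, plus_INR, minus_INR by exact HA.
    transitivity (INR L - INR A + 1 - ((INR L + 1) * alpha - INR A) * (1 - alpha)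
                  - (INR L + 1) * (alpha * alpha - 3 * alpha + 1)).
    - ring.
    - rewrite Hsq. ring. }
  assert (t_bounds : 0 < t < 1) by (unfold t; lra).
  assert (0 < t * (1 - alpha) < 1 - alpha) by nra.
  repeat split.
  - apply (floor_mul_unique alpha alpha_range). rewrite S_INR in Hret. lra.
  - apply (floor_mul_unique alpha alpha_range). lra.
  - intro Hstay. apply (floor_mul_unique alpha alpha_range).
    destruct (floor_mul_spec alpha alpha_range (S (S L))) as [_ s1].
    rewrite Hstay in s1. fold A in s1. rewrite S_INR in s1.
    assert (t * (1 - alpha) <= alpha) by (unfold t in *; nra).
    rewrite (S_INR (S (S P))), (S_INR m). lra.
Qed.

Lemma mech_word_alpha_return (L : nat) :
  let P := (2 * L - floor_mul alpha (S L))%nat in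
  mech_word alpha P = 0%nat /\ (mech_word alpha L = 0%nat -> mech_word alpha (S P) = 1%nat).
Proof.
  intro P. pose proof (floor_mul_S_le alpha alpha_range L).
  replace P with (L + (L - floor_mul alpha (S L)))%nat by (unfold P; lia).
  destruct (floor_mul_alpha_return L) as [H1 [H2 H3]].
  unfold mech_word. rewrite H1, H2. split; [lia|].
  intro H0. rewrite H3; [lia|]. destruct (floor_mul_S alpha alpha_range (S L)); lia.
Qed.

Definition mech_prefix (L : nat) : list nat := map (mech_word alpha) (seq 0 L).

Lemma sigma_mech_prefix (L : nat) :
  Defs.sigma (mech_prefix L) = mech_prefix (2 * L - floor_mul alpha (S L)).
Proof.
  induction L as [|L IH]; [reflexivity|].
  unfold mech_prefix in *. unfold Defs.sigma in *.
  rewrite seq_S, map_app, flat_map_app, IH. cbn [map flat_map Nat.add]. rewrite app_nil_r.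
  pose proof (floor_mul_S_le alpha alpha_range L).
  pose proof (mech_word_le_1 alpha alpha_range L).
  rewrite (floor_mul_SS alpha alpha_range L).
  destruct (mech_word_alpha_return L) as [HP HSP].
  set (P := (2 * L - floor_mul alpha (S L))%nat) in *.
  destruct (mech_word alpha L) as [|[|]] eqn:E; [| |lia].
  - replace (2 * S L - (floor_mul alpha (S L) + 0))%nat with (S (S P)) by (unfold P; lia).
    rewrite !seq_S, !map_app, <- app_assoc. simpl. rewrite HP, (HSP eq_refl). reflexivity.
  - replace (2 * S L - (floor_mul alpha (S L) + 1))%nat with (S P) by (unfold P; lia).
    rewrite seq_S, map_app. simpl. rewrite HP. reflexivity.
Qed.

Lemma floor_mul_alpha_S_lt (L : nat) : (0 < L)%nat -> (floor_mul alpha (S L) < L)%nat.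
Proof.
  intro HL. pose proof alpha_bounds. apply le_INR in HL. simpl in HL.
  destruct (floor_mul_spec alpha alpha_range (S L)) as [h _].
  apply INR_lt. rewrite S_INR in h. nra.
Qed.

Lemma sigma_iter_mech_prefix (k : nat) : exists L, sigma_iter k = mech_prefix L /\ (k < L)%nat.
Proof.
  induction k as [|k [L [E Hk]]].
  - exists 1%nat. split; [|lia].
    destruct (mech_word_alpha_return 0) as [H0 _]. unfold mech_prefix. simpl in *. rewrite H0.
    reflexivity.
  - exists (2 * L - floor_mul alpha (S L))%nat. split.
    + simpl. rewrite E. apply sigma_mech_prefix.
    + pose proof (floor_mul_alpha_S_lt L ltac:(lia)). lia.
Qed.

Lemma fib_word_mech (i : nat) : fib_word i = mech_word alpha i.
Proof.
  unfold fib_word. destruct (sigma_iter_mech_prefix (S i)) as [L [-> HL]].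
  apply (nth_map_seq (mech_word alpha) 0 L i). lia.
Qed.

Lemma F_le_S (k : nat) : (F k <= F (S k))%nat.
Proof. destruct k as [|k]; simpl; lia. Qed.

Lemma F_mul_alpha (k : nat) : exists z : Z, INR (F k) * alpha = IZR z + (- psi) ^ k.
Proof.
  enough (H : (exists z : Z, INR (F k) * alpha = IZR z + (- psi) ^ k) /\
              (exists z : Z, INR (F (S k)) * alpha = IZR z + (- psi) ^ S k)) by apply H.
  induction k as [|k [[z1 E1] [z2 E2]]].
  - split; [exists (-1)%Z | exists 1%Z]; unfold alpha, psi; simpl; ring.
  - split; [exists z2; exact E2|]. exists (z1 + z2)%Z.
    change (F (S (S k))) with (F (S k) + F k)%nat.
    rewrite plus_INR, plus_IZR, Rmult_plus_distr_r, E1, E2.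
    simpl. replace (- psi * (- psi * (- psi) ^ k)) with ((- psi) ^ k * (psi * psi)) by ring.
    rewrite psi_sq. ring.
Qed.

Lemma opp_pow_cases (x : R) (k : nat) : (- x) ^ k = x ^ k \/ (- x) ^ k = - x ^ k.
Proof.
  induction k as [|k [E|E]]; simpl; [left | right | left]; rewrite ?E; ring.
Qed.

Lemma dense_mod1_step (a e1 e2 : R) (J1 J2 : nat) :
  0 < e2 < e1 -> (J1 <= J2)%nat ->
  (exists z1 z2 : Z,
     (INR J1 * a = IZR z1 - e1 /\ INR J2 * a = IZR z2 + e2) \/
     (INR J1 * a = IZR z1 + e1 /\ INR J2 * a = IZR z2 - e2)) ->
  dense_mod1 a (e1 + e2) J2 -> dense_mod1 a e1 (J2 + J1).
Proof.
  intros he hJ [z1 [z2 Hz]] Hdense b.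
  assert (shift_up : forall (j : nat) (k : Z),
            INR (j + J2) * a + IZR (k - z2) = INR j * a + IZR k + (INR J2 * a - IZR z2)).
  { intros. rewrite plus_INR, minus_IZR. ring. }
  assert (shift_down : forall (j : nat) (k : Z), (J1 <= j)%nat ->
            INR (j - J1) * a + IZR (k + z1) = INR j * a + IZR k - (INR J1 * a - IZR z1)).
  { intros. rewrite minus_INR, plus_IZR by assumption. ring. }
  destruct Hz as [[E1 E2]|[E1 E2]].
  - destruct (Hdense (b - e2)) as [j [Hj [k Hk]]].
    destruct (Rlt_le_dec (INR j * a + IZR k) b) as [Hlow|Hin].
    + destruct (Nat.lt_ge_cases j J1) as [HjJ|HjJ].
      * exists (j + J2)%nat. split; [lia|]. exists (k - z2)%Z. rewrite shift_up. lra.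
      * exists (j - J1)%nat. split; [lia|]. exists (k + z1)%Z. rewrite shift_down by exact HjJ. lra.
    + exists j. split; [lia|]. exists k. lra.
  - destruct (Hdense b) as [j [Hj [k Hk]]].
    destruct (Rlt_le_dec (INR j * a + IZR k) (b + e1)) as [Hin|Hhigh].
    + exists j. split; [lia|]. exists k. lra.
    + destruct (Nat.lt_ge_cases j J1) as [HjJ|HjJ].
      * exists (j + J2)%nat. split; [lia|]. exists (k - z2)%Z. rewrite shift_up. lra.
      * exists (j - J1)%nat. split; [lia|]. exists (k + z1)%Z. rewrite shift_down by exact HjJ. lra.
Qed.

Lemma golden_dense (n : nat) : dense_mod1 alpha (psi ^ n) (F (S (S n))).
Proof.
  pose proof psi_bounds as [p0 p1].
  induction n as [|n IH].
  - intro b. exists 0%nat. split; [simpl; lia|]. exists (- Int_part (- b))%Z.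
    destruct (base_Int_part (- b)). rewrite opp_IZR. simpl. lra.
  - change (F (S (S (S n)))) with (F (S (S n)) + F (S n))%nat.
    apply dense_mod1_step with (e2 := psi ^ S (S n)).
    + assert (0 < psi ^ S n) by (apply pow_lt; lra). simpl in *. nra.
    + apply F_le_S.
    + destruct (F_mul_alpha (S n)) as [z1 E1]. destruct (F_mul_alpha (S (S n))) as [z2 E2].
      exists z1, z2. change ((- psi) ^ S (S n)) with (- psi * (- psi) ^ S n) in E2.
      destruct (opp_pow_cases psi (S n)) as [Hs|Hs]; rewrite Hs in E1, E2; [right|left];
        simpl in *; split; lra.
    + replace (psi ^ S n + psi ^ S (S n)) with (psi ^ n) by
        (simpl; replace (psi * (psi * psi ^ n)) with (psi * psi * psi ^ n) by ring;
         rewrite psi_sq; ring).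
      exact IH.
Qed.

Lemma powerRZ_phi_1_sub (n : nat) : powerRZ phi (1 - Z.of_nat (S n)) = psi ^ n.
Proof.
  replace (1 - Z.of_nat (S n))%Z with (- Z.of_nat n)%Z by lia.
  rewrite powerRZ_neg', <- pow_powerRZ, <- pow_inv. f_equal.
  pose proof psi_mul_phi as Hinv. symmetry.
  apply Rmult_inv_r_uniq; [|rewrite Rmult_comm; exact Hinv].
  intro Hphi. rewrite Hphi in Hinv. lra.
Qed.

Lemma frac_alpha_shift (x d : nat) :
  exists N : Z,
    frac (INR (S (x + d)) * alpha) - frac (INR (S x) * alpha) + frac (INR d * phi) = IZR N.
Proof.
  exists (2 * Z.of_nat d - Int_part (INR (S (x + d)) * alpha) + Int_part (INR (S x) * alpha)
          - Int_part (INR d * phi))%Z.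
  unfold frac. rewrite !minus_IZR, plus_IZR, minus_IZR, mult_IZR, <- INR_IZR_INZ.
  rewrite !S_INR, plus_INR. unfold alpha. simpl. ring.
Qed.

Theorem proposition16 (n l : nat) (hn : (1 <= n)%nat) (hl : (1 <= l)%nat) :
  powerRZ phi (1 - Z.of_nat n)%Z <=
    Rmin (frac (INR (2 * l * F n) * phi)) (1 - frac (INR (2 * l * F n) * phi)) ->
  forall x : nat,
    factor fib_word x (x + 2 * F n) <>
    factor fib_word (x + 2 * l * F n) (x + 2 * l * F n + 2 * F n).
Proof.
  intros Hsep x Heq.
  destruct n as [|n]; [lia|]. rewrite powerRZ_phi_1_sub in Hsep.
  set (d := (2 * l * F (S n))%nat) in *.
  assert (Hfloor : forall j, (j <= 2 * F (S n))%nat ->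
            Int_part (frac (INR (S x) * alpha) + INR j * alpha) =
            Int_part (frac (INR (S (x + d)) * alpha) + INR j * alpha)).
  { apply (Int_part_frac_add_eq alpha alpha_range). intros j Hj.
    rewrite <- !fib_word_mech, <- (nth_factor fib_word x _ j Hj),
      <- (nth_factor fib_word (x + d) _ j Hj), Heq.
    reflexivity. }
  assert (Hrange : forall j, (j < F (S (S n)))%nat -> (j <= 2 * F (S n))%nat).
  { intros j Hj. pose proof (F_le_S n). change (F (S (S n))) with (F (S n) + F n)%nat in Hj. lia. }
  pose proof (frac_bounds (INR d * phi)) as Hq.
  set (q := frac (INR d * phi)) in *.
  pose proof (Rmin_l q (1 - q)). pose proof (Rmin_r q (1 - q)).
  destruct (unit_interval_shift _ _ q (frac_bounds _) (frac_bounds _) ltac:(lra)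
              (frac_alpha_shift x d)) as [E|E].
  - destruct (Int_part_shift_differs alpha (psi ^ n) (1 - q) (frac (INR (S x) * alpha)) _
                (golden_dense n) ltac:(lra)) as [j [Hjn Hne]].
    apply Hne. rewrite <- E. exact (Hfloor j (Hrange j Hjn)).
  - destruct (Int_part_shift_differs alpha (psi ^ n) q (frac (INR (S (x + d)) * alpha)) _
                (golden_dense n) ltac:(lra)) as [j [Hjn Hne]].
    apply Hne. rewrite <- E. symmetry. exact (Hfloor j (Hrange j Hjn)).
Qed.
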